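(* Let $n\in\mathbb{N}$ and suppose $0<y_{\ell}<1$ and $0<q_{\ell}<1$ for all $1\le\ell\le n$. Then the function \[ F(x)=\prod_{\ell=1}^{n}\frac{\exp\left(\frac{x^{2}}{\log q_{\ell}^{4}}\right)}{\left(y_{\ell}e^{ix};q_{\ell}\right)_{\infty}},\qquad x\in\mathbb{R}, \] is a positive definite function. Furthermore, for all $m\in\mathbb{N}$ and all $x_{1},\dots,x_{m}\in\mathbb{R}$, the matrices \[ \left(\prod_{\ell=1}^{n}\frac{\exp\left(\frac{(x_{j}-x_{k})^{2}}{\log q_{\ell}^{4}}\right)}{\left(y_{\ell}e^{i(x_{j}-x_{k})};q_{\ell}\right)_{\infty}}\right)_{j,k=1}^{m} \] are positive semidefinite. In particular, \[ \prod_{\ell=1}^{n}\frac{\left(y_{\ell};q_{\ell}\right)_{\infty}}{\left|\left(y_{\ell}e^{ix};q_{\ell}\right)_{\infty}\right|}\exp\left(\frac{x^{2}}{\log q_{\ell}^{4}}\right)\le1,\qquad x\in\mathbb{R}. \]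
   Context: For $0<q<1$ and $a\in\mathbb{C}$, $(a;q)_{\infty}=\prod_{k=0}^{\infty}(1-aq^{k})$. Here $\log q^{4}=4\log q$. A continuous function $f:\mathbb{R}\to\mathbb{C}$ with $f(0)>0$ is called positive definite if for every $n\in\mathbb{N}$ and all $x_{1},\dots,x_{n}\in\mathbb{R}$ the matrix $(f(x_{j}-x_{k}))_{j,k=1}^{n}$ is positive semidefinite, i.e. $\sum_{j,k}f(x_j-x_k)z_j\overline{z_k}\ge0$ for all $z_1,\dots,z_n\in\mathbb{C}$ (equivalently, by Bochner's theorem, $f$ is the Fourier transform of a finite positive measure on $\mathbb{R}$ of total mass $f(0)$). *)

From Stdlib Require Import Reals.
From Coquelicot Require Import Coquelicot.
Open Scope R_scope.

Fixpoint qpoch_partial (a : C) (q : R) (N : nat) : C :=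
  match N with
  | O => 1%C
  | S N' => (qpoch_partial a q N' * (1 - a * RtoC (q ^ N')))%C
  end.

Definition qpoch (a : C) (q : R) : C :=
  (real (Lim_seq (fun N => Re (qpoch_partial a q N))),
   real (Lim_seq (fun N => Im (qpoch_partial a q N)))).

Definition expi (x : R) : C := (cos x, sin x).

Fixpoint Cprod (n : nat) (f : nat -> C) : C :=
  match n with O => 1%C | S n' => (Cprod n' f * f n')%C end.
Fixpoint Csum (n : nat) (f : nat -> C) : C :=
  match n with O => 0%C | S n' => (Csum n' f + f n')%C end.
Fixpoint Rprod (n : nat) (f : nat -> R) : R :=
  match n with O => 1 | S n' => Rprod n' f * f n' end.

Definition psd_matrix (m : nat) (A : nat -> nat -> C) : Prop :=
  forall z : nat -> C,
    let s := Csum m (fun j => Csum m (fun k => (A j k * z j * Cconj (z k))%C)) in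
    Im s = 0 /\ 0 <= Re s.

Definition positive_definite (f : R -> C) : Prop :=
  (forall x, continuous f x) /\
  (Im (f 0) = 0 /\ 0 < Re (f 0)) /\
  (forall (m : nat) (x : nat -> R), psd_matrix m (fun j k => f (x j - x k))).

(* log q^4 = 4 log q *)
Definition theF (n : nat) (y q : nat -> R) (x : R) : C :=
  Cprod n (fun l =>
    (RtoC (exp (x ^ 2 / (4 * ln (q l)))) / qpoch (RtoC (y l) * expi x) (q l))%C).

From Stdlib Require Import Reals Lra Lia.
From Coquelicot Require Import Coquelicot.
Open Scope R_scope.

(* Each factor of F is an entrywise product of kernels of the form
   K(s, r) = lim_N sum_{n<N} c_n v_n(s) conj(v_n(r)) with c_n >= 0:
     1 / (1 - b e^{i(s-r)}) = sum_n b^n e^{ins} conj(e^{inr})        for 0 <= b < 1,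
     exp(-a (s-r)^2) = e^{-a s^2} e^{-a r^2} sum_n (2a)^n s^n r^n / n!   for a >= 0,
   and 1 / (y e^{ix}; q)_oo is the limit of the finite products of the first
   kernels with b = y q^k, while a = -1 / (4 log q) > 0. Multiplying a positive
   semidefinite matrix entrywise by c v v^* amounts to a diagonal congruence,
   so it stays positive semidefinite, and so do sums and limits. Continuity comes
   from the uniform convergence in x of the partial products of
   (y e^{ix}; q)_oo, and the inequality from
   |1 - y q^k e^{ix}| >= 1 - y q^k together with log q < 0. *)

Lemma pow_le_1 x N : 0 <= x <= 1 -> x ^ N <= 1.
Proof.
  intros Hx; induction N as [| N IHN]; simpl; [lra |].
  assert (0 <= x ^ N) by (apply pow_le; lra); nra.
Qed.

Lemma exp_le_compat x y : x <= y -> exp x <= exp y.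
Proof. intros [H | ->]; [left; apply exp_increasing; exact H | right; reflexivity]. Qed.

Lemma ln_lt_0 q : 0 < q < 1 -> ln q < 0.
Proof. intros Hq; rewrite <- ln_1; apply ln_increasing; lra. Qed.

Lemma exp_le_1_minus t y : 0 <= t <= y -> y < 1 -> exp (- (t / (1 - y))) <= 1 - t.
Proof.
  intros Ht Hy.
  assert (Hk : 1 <= (1 - t) * exp (t / (1 - y))).
  { assert (Hd : 0 <= t * (y - t) / (1 - y)).
    { apply Rdiv_le_0_compat; nra. }
    assert (Hexp := exp_ineq1_le (t / (1 - y))).
    assert (Hid : (1 - t) * (1 + t / (1 - y)) = 1 + t * (y - t) / (1 - y)) by (field; lra).
    assert (0 <= (1 - t) * (exp (t / (1 - y)) - (1 + t / (1 - y)))) by (apply Rmult_le_pos; lra).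
    nra. }
  rewrite exp_Ropp.
  apply (Rmult_le_reg_r (exp (t / (1 - y)))); [apply exp_pos |].
  rewrite Rinv_l by (apply Rgt_not_eq, exp_pos); lra.
Qed.

Lemma is_lim_seq_const_eq (u : nat -> R) (c l : R) : (forall N, u N = c) -> is_lim_seq u l -> l = c.
Proof.
  intros Hu Hl.
  assert (Hc : is_lim_seq u c).
  { eapply is_lim_seq_ext; [intros N; symmetry; apply Hu | apply is_lim_seq_const]. }
  apply is_lim_seq_unique in Hl; apply is_lim_seq_unique in Hc.
  rewrite Hc in Hl; injection Hl; auto.
Qed.

Lemma is_lim_seq_cauchy_bound (u b : nat -> R) :
  (forall N d, Rabs (u (N + d)%nat - u N) <= b N) -> is_lim_seq b 0 ->
  is_lim_seq u (real (Lim_seq u)) /\ (forall N, Rabs (u N - real (Lim_seq u)) <= b N).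
Proof.
  intros Hu Hb.
  assert (Hsmall : forall eps : posreal, exists N, forall n, (N <= n)%nat -> b n < eps).
  { intros eps; apply is_lim_seq_Reals in Hb; destruct (Hb eps (cond_pos eps)) as [N HN].
    exists N; intros n Hn; specialize (HN n Hn); unfold Rdist in HN.
    rewrite Rminus_0_r in HN; eapply Rle_lt_trans; [apply Rle_abs | exact HN]. }
  assert (Hex : ex_finite_lim_seq u).
  { apply ex_lim_seq_cauchy_corr; intros eps.
    destruct (Hsmall eps) as [N HN]; exists N; intros n p Hn Hp.
    destruct (Nat.le_ge_cases n p) as [Hnp | Hpn].
    - destruct (Nat.le_exists_sub n p Hnp) as [d [-> _]].
      rewrite Nat.add_comm, Rabs_minus_sym; eapply Rle_lt_trans; [apply Hu | apply HN; exact Hn].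
    - destruct (Nat.le_exists_sub p n Hpn) as [d [-> _]].
      rewrite Nat.add_comm; eapply Rle_lt_trans; [apply Hu | apply HN; exact Hp]. }
  destruct Hex as [l Hl].
  rewrite (is_lim_seq_unique _ _ Hl); simpl; split; [exact Hl |].
  intros N; apply Rabs_le_between'.
  cut (u N - b N <= l <= u N + b N); [lra |].
  assert (Hshift : is_lim_seq (fun d => u (d + N)%nat) l) by (apply is_lim_seq_incr_n; exact Hl).
  assert (Hband : forall d, u N - b N <= u (d + N)%nat <= u N + b N).
  { intros d; apply Rabs_le_between'; rewrite Nat.add_comm; apply Hu. }
  split.
  - exact (is_lim_seq_le _ _ (u N - b N) l (fun d => proj1 (Hband d)) (is_lim_seq_const _) Hshift).
  - exact (is_lim_seq_le _ _ l (u N + b N) (fun d => proj2 (Hband d)) Hshift (is_lim_seq_const _)).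
Qed.

Lemma continuity_pt_of_ex_derive (f : R -> R) x : ex_derive f x -> continuity_pt f x.
Proof. intros H; apply continuity_pt_filterlim; exact (ex_derive_continuous f x H). Qed.

Lemma continuity_pt_unif_lim (f : nat -> R -> R) (g : R -> R) (b : nat -> R) x :
  (forall N, continuity_pt (f N) x) -> (forall N t, Rabs (f N t - g t) <= b N) ->
  is_lim_seq b 0 -> continuity_pt g x.
Proof.
  intros Hf Hfg Hb eps Heps.
  apply is_lim_seq_Reals in Hb.
  destruct (Hb (eps / 3)) as [N HN]; [lra |].
  specialize (HN N (le_n N)); unfold Rdist in HN; rewrite Rminus_0_r in HN.
  assert (HbN : b N < eps / 3) by (eapply Rle_lt_trans; [apply Rle_abs | exact HN]).
  destruct (Hf N (eps / 3)) as [delta [Hdelta Hcont]]; [lra |].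
  exists delta; split; [exact Hdelta |]; intros t Ht.
  specialize (Hcont t Ht); simpl in *; unfold Rdist in *.
  assert (Ht' := Hfg N t); assert (Hx' := Hfg N x).
  replace (g t - g x) with ((g t - f N t) + (f N t - f N x) + (f N x - g x)) by ring.
  rewrite Rabs_minus_sym in Ht'.
  eapply Rle_lt_trans; [apply Rabs_triang |].
  eapply Rle_lt_trans; [apply Rplus_le_compat_r, Rabs_triang |].
  lra.
Qed.

Lemma Rprod_le_1 n (f : nat -> R) :
  (forall l, (l < n)%nat -> 0 <= f l <= 1) -> 0 <= Rprod n f <= 1.
Proof.
  induction n as [| n IHn]; intros Hf; simpl; [lra |].
  assert (Hn := Hf n (Nat.lt_succ_diag_r n)).
  assert (Hprev : 0 <= Rprod n f <= 1) by (apply IHn; intros l Hl; apply Hf; lia).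
  split; nra.
Qed.

Lemma Cmod_1_minus_le (w : C) : Cmod (1 - w) <= 1 + Cmod w.
Proof.
  unfold Cminus; eapply Rle_trans; [apply Cmod_triangle |].
  rewrite Cmod_1, Cmod_opp; lra.
Qed.

Lemma Cmod_1_minus_ge (w : C) : 1 - Cmod w <= Cmod (1 - w).
Proof.
  assert (H := Cmod_triangle (1 - w) w).
  replace (1 - w + w)%C with (RtoC 1) in H by ring.
  rewrite Cmod_1 in H; lra.
Qed.

Lemma Cconj_RtoC (r : R) : Cconj (RtoC r) = RtoC r.
Proof. apply injective_projections; simpl; ring. Qed.

Lemma expi_add a b : (expi a * expi b)%C = expi (a + b).
Proof. unfold expi; apply injective_projections; simpl; rewrite ?cos_plus, ?sin_plus; ring. Qed.

Lemma Cconj_expi a : Cconj (expi a) = expi (- a).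
Proof. unfold expi, Cconj; simpl; rewrite cos_neg, sin_neg; reflexivity. Qed.

Lemma expi_0 : expi 0 = 1%C.
Proof. unfold expi; rewrite cos_0, sin_0; reflexivity. Qed.

Lemma Cmod_expi a : Cmod (expi a) = 1.
Proof.
  unfold Cmod, expi; cbn [fst snd].
  replace (cos a ^ 2 + sin a ^ 2) with 1 by (rewrite <- (sin2_cos2 a); unfold Rsqr; ring).
  apply sqrt_1.
Qed.

Lemma Cmod_RtoC_expi y a : 0 <= y -> Cmod (RtoC y * expi a) = y.
Proof. intros Hy; rewrite Cmod_mult, Cmod_R, Cmod_expi, Rabs_right; lra. Qed.

Definition Ccv (u : nat -> C) (l : C) : Prop :=
  is_lim_seq (fun N => Re (u N)) (Re l) /\ is_lim_seq (fun N => Im (u N)) (Im l).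

Lemma Ccv_ext (u v : nat -> C) (l : C) : (forall N, u N = v N) -> Ccv u l -> Ccv v l.
Proof.
  intros Huv [Hre Him]; split; eapply is_lim_seq_ext; eauto; intros N; simpl; rewrite Huv; auto.
Qed.

Lemma Ccv_const (c : C) : Ccv (fun _ => c) c.
Proof. split; apply is_lim_seq_const. Qed.

Lemma Ccv_plus (u v : nat -> C) (a b : C) :
  Ccv u a -> Ccv v b -> Ccv (fun N => u N + v N)%C (a + b)%C.
Proof. intros [Hu1 Hu2] [Hv1 Hv2]; split; apply is_lim_seq_plus'; auto. Qed.

Lemma Ccv_mult (u v : nat -> C) (a b : C) :
  Ccv u a -> Ccv v b -> Ccv (fun N => u N * v N)%C (a * b)%C.
Proof.
  intros [Hu1 Hu2] [Hv1 Hv2]; split.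
  - apply is_lim_seq_minus'; apply is_lim_seq_mult'; auto.
  - apply is_lim_seq_plus'; apply is_lim_seq_mult'; auto.
Qed.

Lemma Ccv_RtoC (u : nat -> R) (l : R) : is_lim_seq u l -> Ccv (fun N => RtoC (u N)) (RtoC l).
Proof. intros H; split; [exact H | apply is_lim_seq_const]. Qed.

Lemma Ccv_0_of_Cmod (u : nat -> C) : is_lim_seq (fun N => Cmod (u N)) 0 -> Ccv u 0%C.
Proof.
  intros H.
  assert (Hopp := proj1 (is_lim_seq_opp _ _) H); simpl in Hopp; rewrite Ropp_0 in Hopp.
  split; refine (is_lim_seq_le_le _ _ _ 0 _ Hopp H); intros N; apply Rabs_le_between.
  - apply re_le_Cmod.
  - eapply Rle_trans; [apply Rmax_r | apply Rmax_Cmod].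
Qed.

Lemma Ccv_Cmod (u : nat -> C) (l : C) : Ccv u l -> is_lim_seq (fun N => Cmod (u N)) (Cmod l).
Proof.
  intros [Hre Him]; unfold Cmod.
  apply is_lim_seq_continuous; [apply continuity_pt_sqrt; nra |].
  apply (is_lim_seq_ext (fun N => Re (u N) * Re (u N) + Im (u N) * Im (u N)));
    [intros N; unfold Re, Im; ring |].
  replace (fst l ^ 2 + snd l ^ 2) with (Re l * Re l + Im l * Im l) by (unfold Re, Im; ring).
  apply is_lim_seq_plus'; apply is_lim_seq_mult'; auto.
Qed.

Lemma Ccv_inv (u : nat -> C) (l : C) : l <> 0%C -> Ccv u l -> Ccv (fun N => / u N)%C (/ l)%C.
Proof.
  intros Hl [Hre Him].
  set (d := fun c : C => Re c ^ 2 + Im c ^ 2).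
  assert (Hd : d l <> 0).
  { intros E; apply Hl; unfold d, Re, Im in E; apply injective_projections; simpl; nra. }
  assert (Hlim : is_lim_seq (fun N => / d (u N)) (/ d l)).
  { apply (is_lim_seq_inv _ (d l)); [| intros E; apply Hd; injection E; auto].
    apply (is_lim_seq_ext (fun N => Re (u N) * Re (u N) + Im (u N) * Im (u N)));
      [intros N; unfold d; ring |].
    replace (d l) with (Re l * Re l + Im l * Im l) by (unfold d; ring).
    apply is_lim_seq_plus'; apply is_lim_seq_mult'; auto. }
  split.
  - exact (is_lim_seq_mult' _ _ _ _ Hre Hlim).
  - exact (is_lim_seq_mult' _ _ _ _ (proj1 (is_lim_seq_opp _ _) Him) Hlim).
Qed.

Lemma Csum_ext n (f g : nat -> C) : (forall i, f i = g i) -> Csum n f = Csum n g.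
Proof. intros H; induction n; simpl; auto; rewrite IHn, H; auto. Qed.

Lemma Csum_plus n (f g : nat -> C) : Csum n (fun i => f i + g i)%C = (Csum n f + Csum n g)%C.
Proof. induction n; simpl; [ring | rewrite IHn; ring]. Qed.

Lemma Csum_mult_l n (c : C) (f : nat -> C) : Csum n (fun i => c * f i)%C = (c * Csum n f)%C.
Proof. induction n; simpl; [ring | rewrite IHn; ring]. Qed.

Lemma Csum_mult_r n (c : C) (f : nat -> C) : Csum n (fun i => f i * c)%C = (Csum n f * c)%C.
Proof. induction n; simpl; [ring | rewrite IHn; ring]. Qed.

Lemma Csum_conj n (f : nat -> C) : Csum n (fun i => Cconj (f i)) = Cconj (Csum n f).
Proof.
  induction n; simpl.
  - apply injective_projections; simpl; ring.
  - rewrite IHn, Cplus_conj; auto.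
Qed.

Lemma Csum_RtoC (f : nat -> R) N : Csum (S N) (fun n => RtoC (f n)) = RtoC (sum_n f N).
Proof.
  induction N as [| N IHN].
  - rewrite sum_O; simpl; apply injective_projections; simpl; ring.
  - rewrite sum_Sn; change (Csum (S (S N)) (fun n => RtoC (f n)))
      with (Csum (S N) (fun n => RtoC (f n)) + RtoC (f (S N)))%C.
    rewrite IHN; apply injective_projections; simpl; [reflexivity | ring].
Qed.

Lemma Ccv_Csum m (u : nat -> nat -> C) (a : nat -> C) :
  (forall j, Ccv (fun N => u N j) (a j)) -> Ccv (fun N => Csum m (u N)) (Csum m a).
Proof. intros H; induction m; simpl; [apply Ccv_const | apply Ccv_plus; auto]. Qed.

Lemma Ccv_geom (w : C) : Cmod w < 1 -> Ccv (fun N => Csum N (fun n => (w ^ n)%C)) (/ (1 - w))%C.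
Proof.
  intros Hw.
  assert (Hw0 : (1 - w)%C <> 0%C).
  { intros E; assert (H := Cmod_1_minus_ge w); rewrite E, Cmod_0 in H; lra. }
  assert (Htele : forall N, (Csum N (fun n => (w ^ n)%C) * (1 - w))%C = (1 - w ^ N)%C).
  { induction N as [| N IHN]; simpl; [ring |].
    rewrite Cmult_plus_distr_r, IHN; ring. }
  assert (Hpow : Ccv (fun n => (w ^ n)%C) 0%C).
  { apply Ccv_0_of_Cmod; apply (is_lim_seq_ext (fun n => Cmod w ^ n));
      [intros n; symmetry; apply Cmod_pow |].
    apply is_lim_seq_geom; rewrite Rabs_right; [exact Hw | apply Rle_ge, Cmod_ge_0]. }
  apply (Ccv_ext (fun N => / (1 - w) + (- / (1 - w)) * w ^ N)%C).
  - intros N; transitivity ((1 - w ^ N) / (1 - w))%C; [field; exact Hw0 |].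
    rewrite <- Htele; field; exact Hw0.
  - assert (Hlim := Ccv_plus _ _ _ _ (Ccv_const (/ (1 - w)))
                       (Ccv_mult _ _ _ _ (Ccv_const (- / (1 - w))) Hpow)).
    replace (/ (1 - w) + - / (1 - w) * 0)%C with (/ (1 - w))%C in Hlim by ring.
    exact Hlim.
Qed.

Lemma Ccv_exp_series t :
  Ccv (fun N => Csum N (fun n => RtoC (t ^ n / INR (Factorial.fact n)))) (RtoC (exp t)).
Proof.
  assert (Hseries : is_lim_seq (sum_n (fun n => t ^ n / INR (Factorial.fact n))) (exp t)).
  { assert (H := proj1 (is_pseries_R _ _ _) (is_exp_Reals t)).
    eapply is_lim_seq_ext; [| exact H].
    intros N; apply sum_n_ext; intros n; apply Rmult_comm. }
  assert (Hcv := Ccv_RtoC _ _ Hseries).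
  split; apply is_lim_seq_incr_1; eapply is_lim_seq_ext;
    [| apply (proj1 Hcv) | | apply (proj2 Hcv)]; intros N; rewrite Csum_RtoC; reflexivity.
Qed.

Lemma Cprod_pos_real n (f : nat -> C) :
  (forall l, (l < n)%nat -> Im (f l) = 0 /\ 0 < Re (f l)) ->
  Im (Cprod n f) = 0 /\ 0 < Re (Cprod n f).
Proof.
  induction n as [| n IHn]; intros Hf; simpl; [split; lra |].
  destruct IHn as [Him Hre]; [intros l Hl; apply Hf; lia |].
  destruct (Hf n (Nat.lt_succ_diag_r n)) as [Him' Hre'].
  unfold Re, Im in *; rewrite Him, Him'; split; [ring | nra].
Qed.

Definition Ccont (f : R -> C) (x : R) : Prop :=
  continuity_pt (fun t => Re (f t)) x /\ continuity_pt (fun t => Im (f t)) x.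

Lemma Ccont_continuous (f : R -> C) x : Ccont f x -> continuous f x.
Proof.
  intros [Hre Him]; apply continuity_pt_filterlim in Hre, Him.
  apply filterlim_locally; intros eps.
  generalize (filter_and _ _ (proj1 (filterlim_locally _ _) Hre eps)
                             (proj1 (filterlim_locally _ _) Him eps)).
  apply filter_imp; intros t [H1 H2]; split; assumption.
Qed.

Lemma Ccont_const (c : C) x : Ccont (fun _ => c) x.
Proof. split; apply continuity_pt_const; intros a b; reflexivity. Qed.

Lemma Ccont_RtoC (f : R -> R) x : continuity_pt f x -> Ccont (fun t => RtoC (f t)) x.
Proof. intros H; split; [exact H | apply continuity_pt_const; intros a b; reflexivity]. Qed.

Lemma Ccont_expi x : Ccont expi x.
Proof.
  unfold Ccont, expi, Re, Im; cbn [fst snd].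
  split; apply continuity_pt_of_ex_derive; auto_derive; auto.
Qed.

Lemma Ccont_minus (f g : R -> C) x : Ccont f x -> Ccont g x -> Ccont (fun t => f t - g t)%C x.
Proof.
  intros [Hf1 Hf2] [Hg1 Hg2]; split.
  - exact (continuity_pt_minus _ _ x Hf1 Hg1).
  - exact (continuity_pt_minus _ _ x Hf2 Hg2).
Qed.

Lemma Ccont_mult (f g : R -> C) x : Ccont f x -> Ccont g x -> Ccont (fun t => f t * g t)%C x.
Proof.
  intros [Hf1 Hf2] [Hg1 Hg2]; split.
  - exact (continuity_pt_minus _ _ x (continuity_pt_mult _ _ x Hf1 Hg1)
                                     (continuity_pt_mult _ _ x Hf2 Hg2)).
  - exact (continuity_pt_plus _ _ x (continuity_pt_mult _ _ x Hf1 Hg2)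
                                    (continuity_pt_mult _ _ x Hf2 Hg1)).
Qed.

Lemma Ccont_inv (f : R -> C) x : Ccont f x -> f x <> 0%C -> Ccont (fun t => / f t)%C x.
Proof.
  intros [Hre Him] Hfx.
  assert (Hd : fst (f x) ^ 2 + snd (f x) ^ 2 <> 0).
  { intros E; apply Hfx; apply injective_projections; simpl; nra. }
  assert (Hdc : continuity_pt (fun t => fst (f t) ^ 2 + snd (f t) ^ 2) x).
  { assert (Hsq : forall u : R -> R, continuity_pt u x -> continuity_pt (fun t => u t ^ 2) x).
    { intros u Hu; apply (continuity_pt_comp u (fun s => s ^ 2) x Hu).
      apply continuity_pt_of_ex_derive; auto_derive; auto. }
    exact (continuity_pt_plus _ _ x (Hsq _ Hre) (Hsq _ Him)). }
  split.
  - exact (continuity_pt_div _ _ x Hre Hdc Hd).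
  - exact (continuity_pt_div _ _ x (continuity_pt_opp _ x Him) Hdc Hd).
Qed.

Lemma Ccont_Cprod n (f : nat -> R -> C) x :
  (forall l, (l < n)%nat -> Ccont (f l) x) -> Ccont (fun t => Cprod n (fun l => f l t)) x.
Proof.
  induction n as [| n IHn]; intros Hf; simpl; [apply Ccont_const |].
  apply Ccont_mult; [apply IHn; intros l Hl |]; apply Hf; lia.
Qed.

(** * Positive semidefinite matrices *)

Definition qform (m : nat) (A : nat -> nat -> C) (z : nat -> C) : C :=
  Csum m (fun j => Csum m (fun k => (A j k * z j * Cconj (z k))%C)).

Lemma psd_matrix_qform m (A : nat -> nat -> C) :
  psd_matrix m A <-> forall z, Im (qform m A z) = 0 /\ 0 <= Re (qform m A z).
Proof. reflexivity. Qed.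

Lemma psd_matrix_ext m (A B : nat -> nat -> C) :
  (forall j k, A j k = B j k) -> psd_matrix m A -> psd_matrix m B.
Proof.
  intros HAB HA; apply psd_matrix_qform; intros z.
  replace (qform m B z) with (qform m A z); [exact (HA z) |].
  unfold qform; apply Csum_ext; intros j; apply Csum_ext; intros k; rewrite HAB; auto.
Qed.

Lemma psd_matrix_one m : psd_matrix m (fun _ _ => 1%C).
Proof.
  apply psd_matrix_qform; intros z.
  replace (qform m (fun _ _ => 1%C) z) with (Csum m z * Cconj (Csum m z))%C.
  - destruct (Csum m z) as [a b]; simpl; split; [ring | nra].
  - unfold qform; rewrite <- Csum_mult_r; apply Csum_ext; intros j.
    rewrite <- Csum_conj, <- Csum_mult_l; apply Csum_ext; intros k; ring.
Qed.

Lemma psd_matrix_plus m (A B : nat -> nat -> C) :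
  psd_matrix m A -> psd_matrix m B -> psd_matrix m (fun j k => A j k + B j k)%C.
Proof.
  rewrite !psd_matrix_qform; intros HA HB z.
  replace (qform m (fun j k => A j k + B j k)%C z) with (qform m A z + qform m B z)%C.
  - destruct (HA z), (HB z); destruct (qform m A z), (qform m B z); simpl in *; split; lra.
  - unfold qform; rewrite <- Csum_plus; apply Csum_ext; intros j.
    rewrite <- Csum_plus; apply Csum_ext; intros k; ring.
Qed.

Lemma psd_matrix_lim m (A : nat -> nat -> nat -> C) (B : nat -> nat -> C) :
  (forall j k, Ccv (fun N => A N j k) (B j k)) -> (forall N, psd_matrix m (A N)) ->
  psd_matrix m B.
Proof.
  intros HAB; setoid_rewrite psd_matrix_qform; intros HA z.
  assert (Hcv : Ccv (fun N => qform m (A N) z) (qform m B z)).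
  { apply Ccv_Csum; intros j; apply Ccv_Csum; intros k.
    apply Ccv_mult; [apply Ccv_mult |]; auto; apply Ccv_const. }
  destruct Hcv as [Hre Him]; split.
  - exact (is_lim_seq_const_eq _ 0 _ (fun N => proj1 (HA N z)) Him).
  - exact (is_lim_seq_le (fun _ => 0) _ 0 _ (fun N => proj2 (HA N z)) (is_lim_seq_const 0) Hre).
Qed.

Lemma psd_mul_rank1 m (K : nat -> nat -> C) (c : R) (v : nat -> C) :
  psd_matrix m K -> 0 <= c ->
  psd_matrix m (fun j k => K j k * (RtoC c * v j * Cconj (v k)))%C.
Proof.
  rewrite !psd_matrix_qform; intros HK Hc z.
  replace (qform m (fun j k => K j k * (RtoC c * v j * Cconj (v k)))%C z)
    with (RtoC c * qform m K (fun j => z j * v j))%C.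
  - destruct (HK (fun j => z j * v j)%C) as [Him Hre].
    destruct (qform m K (fun j => z j * v j)%C) as [a b]; simpl in *.
    rewrite Him; split; [ring | nra].
  - unfold qform; rewrite <- Csum_mult_l; apply Csum_ext; intros j.
    rewrite <- Csum_mult_l; apply Csum_ext; intros k; rewrite Cmult_conj; ring.
Qed.

Lemma psd_mul_series m (K : nat -> nat -> C) (c : nat -> R) (v : nat -> nat -> C)
  (L : nat -> nat -> C) :
  psd_matrix m K -> (forall n, 0 <= c n) ->
  (forall j k, Ccv (fun N => Csum N (fun n => RtoC (c n) * v n j * Cconj (v n k))%C) (L j k)) ->
  psd_matrix m (fun j k => K j k * L j k)%C.
Proof.
  intros HK Hc HL.
  apply (psd_matrix_lim m (fun N j k =>
           K j k * Csum N (fun n => RtoC (c n) * v n j * Cconj (v n k)))%C).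
  - intros j k; apply Ccv_mult; [apply Ccv_const | auto].
  - induction N; simpl.
    + (* The empty sum: the rank-one case with c = 0. *)
      eapply psd_matrix_ext; [| apply (psd_mul_rank1 m K 0 (fun _ => 0%C) HK (Rle_refl 0))].
      intros j k; simpl; ring.
    + eapply psd_matrix_ext;
        [| exact (psd_matrix_plus _ _ _ IHN (psd_mul_rank1 m K (c N) (v N) HK (Hc N)))].
      intros j k; simpl; ring.
Qed.

Lemma psd_mul_Cprod m n (f : nat -> nat -> nat -> C) :
  (forall l K, (l < n)%nat -> psd_matrix m K -> psd_matrix m (fun j k => K j k * f l j k)%C) ->
  psd_matrix m (fun j k => Cprod n (fun l => f l j k)).
Proof.
  induction n as [| n IHn]; intros Hf; simpl.
  - apply psd_matrix_one.
  - apply Hf; [lia |]; apply IHn; intros l K Hl; apply Hf; lia.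
Qed.

Lemma psd_mul_geom m (K : nat -> nat -> C) b (x : nat -> R) :
  psd_matrix m K -> 0 <= b < 1 ->
  psd_matrix m (fun j k => K j k * / (1 - RtoC b * expi (x j - x k)))%C.
Proof.
  intros HK Hb.
  apply (psd_mul_series m K (fun n => b ^ n) (fun n j => (expi (x j) ^ n)%C)); auto.
  - intros n; apply pow_le; lra.
  - intros j k; eapply Ccv_ext; [| apply Ccv_geom; rewrite Cmod_RtoC_expi; lra].
    intros N; apply Csum_ext; intros n.
    rewrite RtoC_pow, Cpow_conj, Cconj_expi, <- !Cpow_mult_l, <- Cmult_assoc, expi_add.
    reflexivity.
Qed.

Lemma psd_mul_exp_prod m (K : nat -> nat -> C) al (x : nat -> R) :
  psd_matrix m K -> 0 <= al ->
  psd_matrix m (fun j k => K j k * RtoC (exp (2 * al * x j * x k)))%C.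
Proof.
  intros HK Hal.
  apply (psd_mul_series m K (fun n => (2 * al) ^ n / INR (Factorial.fact n))
                               (fun n j => RtoC (x j ^ n))); auto.
  - intros n; apply Rdiv_le_0_compat; [apply pow_le; lra | apply INR_fact_lt_0].
  - intros j k; eapply Ccv_ext; [| apply Ccv_exp_series].
    intros N; apply Csum_ext; intros n.
    rewrite Cconj_RtoC, <- !RtoC_mult; f_equal.
    rewrite !Rpow_mult_distr; unfold Rdiv; ring.
Qed.

Lemma psd_mul_gauss m (K : nat -> nat -> C) al (x : nat -> R) :
  psd_matrix m K -> 0 <= al ->
  psd_matrix m (fun j k => K j k * RtoC (exp (- (al * (x j - x k) ^ 2))))%C.
Proof.
  intros HK Hal.
  assert (Hprod := psd_mul_exp_prod m K al x HK Hal).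
  eapply psd_matrix_ext;
    [| exact (psd_mul_rank1 m _ 1 (fun j => RtoC (exp (- (al * x j ^ 2)))) Hprod Rle_0_1)].
  intros j k; cbv beta; rewrite Cconj_RtoC, <- !RtoC_mult, <- Cmult_assoc, <- RtoC_mult.
  do 2 f_equal; rewrite Rmult_1_l, <- !exp_plus; f_equal; ring.
Qed.

(** * The q-Pochhammer symbol *)

Lemma qpoch_partial_RtoC (y q : R) N :
  qpoch_partial (RtoC y) q N = RtoC (Rprod N (fun k => 1 - y * q ^ k)).
Proof.
  induction N; simpl; [reflexivity |].
  rewrite IHN; apply injective_projections; simpl; ring.
Qed.

Section QPochhammer.

Variable q : R.
Hypothesis Hq : 0 < q < 1.

Definition qpoch_tail N := exp (/ (1 - q)) * q ^ N / (1 - q).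

Lemma qpoch_partial_bound (a : C) N :
  Cmod a <= 1 -> Cmod (qpoch_partial a q N) <= exp (/ (1 - q)).
Proof.
  intros Ha.
  (* (1 - q^N) / (1 - q) = sum_{k<N} q^k, and |1 - a q^k| <= 1 + q^k <= exp (q^k). *)
  assert (Hsharp : Cmod (qpoch_partial a q N) <= exp ((1 - q ^ N) / (1 - q))).
  { induction N as [| N IHN]; simpl.
    - rewrite Cmod_1; replace ((1 - 1) / (1 - q)) with 0 by (field; lra).
      rewrite exp_0; lra.
    - assert (HqN : 0 <= q ^ N) by (apply pow_le; lra).
      rewrite Cmod_mult.
      replace ((1 - q * q ^ N) / (1 - q)) with ((1 - q ^ N) / (1 - q) + q ^ N) by (field; lra).
      rewrite exp_plus.
      apply Rmult_le_compat; [apply Cmod_ge_0 | apply Cmod_ge_0 | exact IHN |].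
      eapply Rle_trans; [apply Cmod_1_minus_le |].
      eapply Rle_trans; [| apply exp_ineq1_le].
      rewrite Cmod_mult, Cmod_R, Rabs_right by lra; nra. }
  eapply Rle_trans; [exact Hsharp |]; apply exp_le_compat.
  assert (0 <= q ^ N) by (apply pow_le; lra).
  unfold Rdiv; rewrite <- (Rmult_1_l (/ (1 - q))) at 2.
  apply Rmult_le_compat_r; [left; apply Rinv_0_lt_compat |]; lra.
Qed.

Lemma qpoch_partial_cauchy (a : C) N d :
  Cmod a <= 1 -> Cmod (qpoch_partial a q (N + d) - qpoch_partial a q N) <= qpoch_tail N.
Proof.
  intros Ha.
  assert (Hstep : forall k, Cmod (qpoch_partial a q (S k) - qpoch_partial a q k)
                            <= exp (/ (1 - q)) * q ^ k).
  { intros k; simpl.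
    replace (qpoch_partial a q k * (1 - a * RtoC (q ^ k)) - qpoch_partial a q k)%C
      with (- (qpoch_partial a q k * a * RtoC (q ^ k)))%C by ring.
    assert (Hqk : 0 <= q ^ k) by (apply pow_le; lra).
    rewrite Cmod_opp, !Cmod_mult, Cmod_R, Rabs_right by lra.
    apply Rmult_le_compat_r; [exact Hqk |].
    rewrite <- Rmult_1_r; apply Rmult_le_compat; try apply Cmod_ge_0; auto.
    apply qpoch_partial_bound; exact Ha. }
  assert (Htele : Cmod (qpoch_partial a q (N + d) - qpoch_partial a q N)
                  <= exp (/ (1 - q)) * (q ^ N - q ^ (N + d)) / (1 - q)).
  { induction d as [| d IHd].
    - rewrite Nat.add_0_r, Rminus_diag, Rmult_0_r.
      replace (qpoch_partial a q N - qpoch_partial a q N)%C with (RtoC 0) by ring.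
      rewrite Cmod_0; unfold Rdiv; lra.
    - rewrite Nat.add_succ_r.
      replace (qpoch_partial a q (S (N + d)) - qpoch_partial a q N)%C
        with ((qpoch_partial a q (S (N + d)) - qpoch_partial a q (N + d))
              + (qpoch_partial a q (N + d) - qpoch_partial a q N))%C by ring.
      eapply Rle_trans; [apply Cmod_triangle |].
      eapply Rle_trans; [apply Rplus_le_compat; [apply Hstep | exact IHd] |].
      right; simpl; field; lra. }
  eapply Rle_trans; [exact Htele |]; unfold qpoch_tail, Rdiv.
  assert (0 <= q ^ (N + d)) by (apply pow_le; lra).
  assert (0 < exp (/ (1 - q))) by apply exp_pos.
  apply Rmult_le_compat_r; [left; apply Rinv_0_lt_compat; lra | nra].
Qed.

Lemma is_lim_seq_qpoch_tail : is_lim_seq qpoch_tail 0.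
Proof.
  replace (Finite 0) with (Finite (exp (/ (1 - q)) * 0 / (1 - q))) by (f_equal; field; lra).
  apply is_lim_seq_mult'; [apply is_lim_seq_mult' | apply is_lim_seq_const].
  - apply is_lim_seq_const.
  - apply is_lim_seq_geom; rewrite Rabs_right; lra.
Qed.

Lemma qpoch_partial_cv (a : C) :
  Cmod a <= 1 ->
  Ccv (qpoch_partial a q) (qpoch a q) /\
  (forall N, Rabs (Re (qpoch_partial a q N) - Re (qpoch a q)) <= qpoch_tail N /\
             Rabs (Im (qpoch_partial a q N) - Im (qpoch a q)) <= qpoch_tail N).
Proof.
  intros Ha.
  destruct (is_lim_seq_cauchy_bound (fun N => Re (qpoch_partial a q N)) qpoch_tail)
    as [Hre Hre_bound]; [| apply is_lim_seq_qpoch_tail |].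
  { intros N d; eapply Rle_trans; [| apply (qpoch_partial_cauchy a N d Ha)].
    eapply Rle_trans; [| apply re_le_Cmod]; right; reflexivity. }
  destruct (is_lim_seq_cauchy_bound (fun N => Im (qpoch_partial a q N)) qpoch_tail)
    as [Him Him_bound]; [| apply is_lim_seq_qpoch_tail |].
  { intros N d; eapply Rle_trans; [| apply (qpoch_partial_cauchy a N d Ha)].
    eapply Rle_trans; [| eapply Rle_trans; [apply Rmax_r | apply Rmax_Cmod]].
    right; reflexivity. }
  split; [split |]; auto.
Qed.

Lemma Rprod_1_minus_lb y N :
  0 <= y < 1 -> exp (- (y / (1 - y) / (1 - q))) <= Rprod N (fun k => 1 - y * q ^ k).
Proof.
  intros Hy.
  assert (Hc : 0 <= y / (1 - y)) by (apply Rdiv_le_0_compat; lra).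
  assert (Hsharp : exp (- (y / (1 - y) * ((1 - q ^ N) / (1 - q))))
                   <= Rprod N (fun k => 1 - y * q ^ k)).
  { induction N as [| N IHN]; simpl.
    - replace (- (y / (1 - y) * ((1 - 1) / (1 - q)))) with 0 by (field; lra).
      rewrite exp_0; lra.
    - assert (HqN : 0 <= q ^ N) by (apply pow_le; lra).
      assert (HqN1 : q ^ N <= 1) by (apply pow_le_1; lra).
      replace (- (y / (1 - y) * ((1 - q * q ^ N) / (1 - q))))
        with (- (y / (1 - y) * ((1 - q ^ N) / (1 - q))) + - (y * q ^ N / (1 - y)))
        by (field; lra).
      rewrite exp_plus.
      apply Rmult_le_compat; [left; apply exp_pos | left; apply exp_pos | exact IHN |].
      apply exp_le_1_minus; [split |]; nra. }
  eapply Rle_trans; [| exact Hsharp]; apply exp_le_compat.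
  assert (0 <= q ^ N) by (apply pow_le; lra).
  apply Ropp_le_contravar; unfold Rdiv.
  apply Rmult_le_compat_l; [exact Hc |].
  rewrite <- (Rmult_1_l (/ (1 - q))) at 2.
  apply Rmult_le_compat_r; [left; apply Rinv_0_lt_compat |]; lra.
Qed.

Lemma Cmod_qpoch_partial_ge (a : C) y N :
  0 <= y < 1 -> Cmod a <= y -> Rprod N (fun k => 1 - y * q ^ k) <= Cmod (qpoch_partial a q N).
Proof.
  intros Hy Ha; induction N as [| N IHN]; simpl; [rewrite Cmod_1; lra |].
  assert (HqN : 0 <= q ^ N) by (apply pow_le; lra).
  assert (HqN1 : q ^ N <= 1) by (apply pow_le_1; lra).
  assert (Hprod := Rprod_1_minus_lb y N Hy).
  assert (Hexp := exp_pos (- (y / (1 - y) / (1 - q)))).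
  rewrite Cmod_mult; apply Rmult_le_compat; [lra | nra | exact IHN |].
  eapply Rle_trans; [| apply Cmod_1_minus_ge].
  rewrite Cmod_mult, Cmod_R, Rabs_right by lra.
  assert (0 <= Cmod a) by apply Cmod_ge_0; nra.
Qed.

Lemma qpoch_partial_neq0 (a : C) N : Cmod a < 1 -> qpoch_partial a q N <> 0%C.
Proof.
  intros Ha; apply Cmod_gt_0.
  assert (Hy : 0 <= Cmod a < 1) by (split; [apply Cmod_ge_0 | exact Ha]).
  eapply Rlt_le_trans; [| apply (Cmod_qpoch_partial_ge a (Cmod a) N Hy (Rle_refl _))].
  eapply Rlt_le_trans; [apply exp_pos | apply Rprod_1_minus_lb; exact Hy].
Qed.

Lemma qpoch_RtoC y : 0 <= y < 1 -> qpoch (RtoC y) q = RtoC (Re (qpoch (RtoC y) q)).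
Proof.
  intros Hy.
  assert (Hy1 : Cmod (RtoC y) <= 1) by (rewrite Cmod_R, Rabs_right; lra).
  destruct (qpoch_partial_cv (RtoC y) Hy1) as [[_ Him] _].
  apply injective_projections; [reflexivity |]; simpl.
  refine (is_lim_seq_const_eq _ 0 _ (fun N => _) Him).
  rewrite qpoch_partial_RtoC; reflexivity.
Qed.

Lemma Re_qpoch_RtoC_pos y : 0 <= y < 1 -> 0 < Re (qpoch (RtoC y) q).
Proof.
  intros Hy.
  assert (Hy1 : Cmod (RtoC y) <= 1) by (rewrite Cmod_R, Rabs_right; lra).
  destruct (qpoch_partial_cv (RtoC y) Hy1) as [[Hre _] _].
  eapply Rlt_le_trans; [apply (exp_pos (- (y / (1 - y) / (1 - q)))) |].
  refine (is_lim_seq_le (fun _ => _) _ _ _ (fun N => _) (is_lim_seq_const _) Hre).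
  rewrite qpoch_partial_RtoC; apply Rprod_1_minus_lb; exact Hy.
Qed.

Lemma Cmod_qpoch_ge (a : C) y :
  0 <= y < 1 -> Cmod a <= y -> Re (qpoch (RtoC y) q) <= Cmod (qpoch a q).
Proof.
  intros Hy Ha.
  assert (Hy1 : Cmod (RtoC y) <= 1) by (rewrite Cmod_R, Rabs_right; lra).
  destruct (qpoch_partial_cv (RtoC y) Hy1) as [[Hre _] _].
  destruct (qpoch_partial_cv a ltac:(lra)) as [Hcv _].
  refine (is_lim_seq_le _ _ _ _ (fun N => _) Hre (Ccv_Cmod _ _ Hcv)).
  rewrite qpoch_partial_RtoC; apply Cmod_qpoch_partial_ge; assumption.
Qed.

Lemma qpoch_neq0 (a : C) : Cmod a < 1 -> qpoch a q <> 0%C.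
Proof.
  intros Ha; apply Cmod_gt_0.
  assert (Hy : 0 <= Cmod a < 1) by (split; [apply Cmod_ge_0 | exact Ha]).
  eapply Rlt_le_trans; [apply (Re_qpoch_RtoC_pos _ Hy) | apply Cmod_qpoch_ge; lra].
Qed.

Lemma Ccont_qpoch_partial (a : R -> C) N x :
  Ccont a x -> Ccont (fun t => qpoch_partial (a t) q N) x.
Proof.
  intros Ha; induction N as [| N IHN]; simpl; [apply Ccont_const |].
  apply Ccont_mult; [exact IHN |].
  apply Ccont_minus; [apply Ccont_const |].
  apply Ccont_mult; [exact Ha | apply Ccont_const].
Qed.

Lemma Ccont_qpoch (a : R -> C) x :
  (forall t, Cmod (a t) <= 1) -> Ccont a x -> Ccont (fun t => qpoch (a t) q) x.
Proof.
  intros Ha1 Ha; split.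
  - apply (continuity_pt_unif_lim (fun N t => Re (qpoch_partial (a t) q N)) _ qpoch_tail).
    + intros N; apply Ccont_qpoch_partial; exact Ha.
    + intros N t; apply (proj2 (qpoch_partial_cv (a t) (Ha1 t)) N).
    + exact is_lim_seq_qpoch_tail.
  - apply (continuity_pt_unif_lim (fun N t => Im (qpoch_partial (a t) q N)) _ qpoch_tail).
    + intros N; apply Ccont_qpoch_partial; exact Ha.
    + intros N t; apply (proj2 (qpoch_partial_cv (a t) (Ha1 t)) N).
    + exact is_lim_seq_qpoch_tail.
Qed.

End QPochhammer.

Lemma Cprod_inv_1_minus (y q t : R) N :
  0 <= y < 1 -> 0 < q < 1 ->
  Cprod N (fun i => / (1 - RtoC (y * q ^ i) * expi t))%C
  = (/ qpoch_partial (RtoC y * expi t) q N)%C.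
Proof.
  intros Hy Hq; induction N as [| N IHN]; simpl.
  - apply injective_projections; simpl; field.
  - assert (Hqn : 0 <= q ^ N <= 1) by (split; [apply pow_le | apply pow_le_1]; lra).
    assert (Hfactor : (1 - RtoC (y * q ^ N) * expi t)%C <> 0%C).
    { apply Cmod_gt_0; eapply Rlt_le_trans; [| apply Cmod_1_minus_ge].
      rewrite RtoC_mult, <- Cmult_assoc, (Cmult_comm (RtoC (q ^ N))), Cmult_assoc,
        Cmod_mult, Cmod_RtoC_expi, Cmod_R, Rabs_right; nra. }
    assert (Hpartial : qpoch_partial (RtoC y * expi t) q N <> 0%C).
    { apply qpoch_partial_neq0; [exact Hq |]; rewrite Cmod_RtoC_expi; lra. }
    rewrite IHN, RtoC_mult in *.
    replace (RtoC y * expi t * RtoC (q ^ N))%C with (RtoC y * RtoC (q ^ N) * expi t)%C by ring.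
    field; split; assumption.
Qed.

Lemma psd_mul_inv_qpoch m (K : nat -> nat -> C) y q (x : nat -> R) :
  psd_matrix m K -> 0 <= y < 1 -> 0 < q < 1 ->
  psd_matrix m (fun j k => K j k * / qpoch (RtoC y * expi (x j - x k)) q)%C.
Proof.
  intros HK Hy Hq.
  apply (psd_matrix_lim m (fun N j k =>
           K j k * Cprod N (fun i => / (1 - RtoC (y * q ^ i) * expi (x j - x k))))%C).
  - intros j k.
    apply (Ccv_ext (fun N => K j k * / qpoch_partial (RtoC y * expi (x j - x k)) q N)%C).
    { intros N; rewrite Cprod_inv_1_minus; auto. }
    assert (Ha : Cmod (RtoC y * expi (x j - x k)) < 1) by (rewrite Cmod_RtoC_expi; lra).
    apply Ccv_mult; [apply Ccv_const |].
    apply Ccv_inv; [apply qpoch_neq0; assumption |].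
    apply (qpoch_partial_cv q Hq); lra.
  - induction N as [| N IHN]; simpl.
    + eapply psd_matrix_ext; [| exact HK]; intros j k; ring.
    + eapply psd_matrix_ext; [| apply (psd_mul_geom m _ (y * q ^ N) x IHN)].
      * intros j k; cbv beta; ring.
      * assert (0 <= q ^ N <= 1) by (split; [apply pow_le | apply pow_le_1]; lra); split; nra.
Qed.

Definition gauss_qpoch_factor (y q t : R) : C :=
  (RtoC (exp (t ^ 2 / (4 * ln q))) / qpoch (RtoC y * expi t) q)%C.

Lemma psd_mul_gauss_qpoch_factor m (K : nat -> nat -> C) y q (x : nat -> R) :
  psd_matrix m K -> 0 <= y < 1 -> 0 < q < 1 ->
  psd_matrix m (fun j k => K j k * gauss_qpoch_factor y q (x j - x k))%C.
Proof.
  intros HK Hy Hq.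
  assert (Hln := ln_lt_0 q Hq).
  set (al := - / (4 * ln q)).
  assert (Hal : 0 <= al) by (left; apply Ropp_0_gt_lt_contravar, Rinv_lt_0_compat; lra).
  eapply psd_matrix_ext;
    [| exact (psd_mul_inv_qpoch m _ y q x (psd_mul_gauss m K al x HK Hal) Hy Hq)].
  intros j k; unfold gauss_qpoch_factor, Cdiv.
  replace ((x j - x k) ^ 2 / (4 * ln q)) with (- (al * (x j - x k) ^ 2)) by (unfold al; field; lra).
  ring.
Qed.

Lemma Ccont_gauss_qpoch_factor y q x :
  0 <= y < 1 -> 0 < q < 1 -> Ccont (gauss_qpoch_factor y q) x.
Proof.
  intros Hy Hq.
  assert (Hln := ln_lt_0 q Hq).
  assert (Hbound : forall t, Cmod (RtoC y * expi t) < 1) by (intros t; rewrite Cmod_RtoC_expi; lra).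
  apply Ccont_mult.
  - apply Ccont_RtoC, continuity_pt_of_ex_derive; auto_derive; lra.
  - apply Ccont_inv; [| apply qpoch_neq0; auto].
    apply Ccont_qpoch; [exact Hq | intros t; left; apply Hbound |].
    apply Ccont_mult; [apply Ccont_const | apply Ccont_expi].
Qed.

Lemma gauss_qpoch_factor_0 y q :
  0 <= y < 1 -> 0 < q < 1 ->
  Im (gauss_qpoch_factor y q 0) = 0 /\ 0 < Re (gauss_qpoch_factor y q 0).
Proof.
  intros Hy Hq.
  assert (Hpos := Re_qpoch_RtoC_pos q Hq y Hy).
  assert (Hln := ln_lt_0 q Hq).
  unfold gauss_qpoch_factor; rewrite expi_0, Cmult_1_r, qpoch_RtoC by assumption.
  replace (0 ^ 2 / (4 * ln q)) with 0 by (field; lra).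
  rewrite exp_0, <- RtoC_div by lra.
  split; [reflexivity | apply Rdiv_lt_0_compat; lra].
Qed.

Lemma qpoch_ratio_gauss_bound y q x :
  0 <= y < 1 -> 0 < q < 1 ->
  0 <= Re (qpoch (RtoC y) q) / Cmod (qpoch (RtoC y * expi x) q) * exp (x ^ 2 / (4 * ln q)) <= 1.
Proof.
  intros Hy Hq.
  assert (Hpos := Re_qpoch_RtoC_pos q Hq y Hy).
  assert (Hge := Cmod_qpoch_ge q Hq (RtoC y * expi x) y Hy ltac:(rewrite Cmod_RtoC_expi; lra)).
  assert (Hgauss : exp (x ^ 2 / (4 * ln q)) <= 1).
  { rewrite <- exp_0; apply exp_le_compat.
    assert (Hln := ln_lt_0 q Hq); assert (0 <= x ^ 2) by apply pow2_ge_0.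
    unfold Rdiv; assert (/ (4 * ln q) < 0) by (apply Rinv_lt_0_compat; lra); nra. }
  assert (Hratio : 0 <= Re (qpoch (RtoC y) q) / Cmod (qpoch (RtoC y * expi x) q) <= 1).
  { split; [apply Rdiv_le_0_compat; lra |].
    apply (Rmult_le_reg_r (Cmod (qpoch (RtoC y * expi x) q))); [lra |].
    unfold Rdiv; rewrite Rmult_assoc, Rinv_l; lra. }
  assert (Hexp := exp_pos (x ^ 2 / (4 * ln q))).
  split; nra.
Qed.

Theorem theorem2p1 (n : nat) (y q : nat -> R)
  (hy : forall l, (l < n)%nat -> 0 < y l < 1)
  (hq : forall l, (l < n)%nat -> 0 < q l < 1) :
  positive_definite (theF n y q) /\
  (forall (m : nat) (x : nat -> R),
     psd_matrix m (fun j k =>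
       Cprod n (fun l =>
         (RtoC (exp ((x j - x k) ^ 2 / (4 * ln (q l))))
          / qpoch (RtoC (y l) * expi (x j - x k)) (q l))%C))) /\
  (forall x : R,
     Rprod n (fun l =>
       Re (qpoch (RtoC (y l)) (q l)) / Cmod (qpoch (RtoC (y l) * expi x) (q l))
       * exp (x ^ 2 / (4 * ln (q l)))) <= 1).
Proof.
  assert (hy' : forall l, (l < n)%nat -> 0 <= y l < 1) by (intros l Hl; specialize (hy l Hl); lra).
  assert (Hpsd : forall m x, psd_matrix m (fun j k =>
                   Cprod n (fun l => gauss_qpoch_factor (y l) (q l) (x j - x k)))).
  { intros m x; apply psd_mul_Cprod; intros l K Hl HK.
    apply psd_mul_gauss_qpoch_factor; auto. }
  split; [split; [| split] | split].
  - intros x; apply Ccont_continuous, Ccont_Cprod; intros l Hl.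
    apply Ccont_gauss_qpoch_factor; auto.
  - apply Cprod_pos_real; intros l Hl; apply gauss_qpoch_factor_0; auto.
  - exact Hpsd.
  - exact Hpsd.
  - intros x; apply Rprod_le_1; intros l Hl; apply qpoch_ratio_gauss_bound; auto.
Qed.
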